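(* Let $\mathcal{X}=\mathcal{Y}=\mathcal{A}=\mathcal{B}=\{0,1\}$ and $\kappa\in[0,1)$. Then $$\max_{p\in\mathcal{P}_2^{AB,(0,\kappa)}}\ \big(\langle A_0B_0\rangle+\langle A_0B_1\rangle+\langle A_1B_0\rangle-\langle A_1B_1\rangle\big)=2+2\kappa,$$ where $\langle A_xB_y\rangle=\sum_{a,b\in\{0,1\}}(-1)^{a+b}p(ab|xy)$.
   Context: $\mathcal{P}_2^{AB,(\epsilon_A,\epsilon_B)}$ is the set of all conditional distributions $p(ab|xy)$ for which there exist a probability space $(\Lambda,q)$ and distributions $p_A(\cdot|x,y,\lambda)$, $p_B(\cdot|x,y,\lambda)$ on $\{0,1\}$ with $p(ab|xy)=\int q(d\lambda)p_A(a|xy\lambda)p_B(b|xy\lambda)$, $\frac12\sum_a|p_A(a|xy\lambda)-p_A(a|xy'\lambda)|\le\epsilon_A$ for all $x,y,y',\lambda$, and $\frac12\sum_b|p_B(b|xy\lambda)-p_B(b|x'y\lambda)|\le\epsilon_B$ for all $y,x,x',\lambda$. With $\epsilon_A=0,\epsilon_B=\kappa$ this models leakage of Alice's input to Bob's outcome only. *)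

From HB Require Import structures.
From mathcomp Require Import all_boot all_order all_algebra.
From mathcomp Require Import all_classical all_reals all_analysis.
Set Implicit Arguments. Unset Strict Implicit. Unset Printing Implicit Defensive.
Import Order.TTheory GRing.Theory Num.Theory.
Local Open Scope ring_scope.

(* Inputs/outputs in {0,1} are encoded by bool: false = 0, true = 1. *)
Definition bsign (R : ringType) (b : bool) : R := if b then -1 else 1.

(* A conditional distribution p(ab|xy) is a function  p a b x y. *)
Definition behaviour (R : realType) := bool -> bool -> bool -> bool -> R.

Definition is_distr (R : realType) (f : bool -> R) : Prop :=
  (forall a, 0 <= f a) /\ f false + f true = 1.

Definition tvd (R : realType) (f g : bool -> R) : R :=
  2^-1 * (`|f false - g false| + `|f true - g true|).

(* The set P_2^{AB,(eA,eB)}: there exist a probability space (Lambda, q)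
   and (measurable in lambda) local response distributions
   pA(a|x y lambda) = pA x y lambda a, pB(b|x y lambda) = pB x y lambda b,
   with p(ab|xy) = int q(dl) pA(a|xyl) pB(b|xyl) and the relaxed
   no-signalling constraints. *)
Definition in_P2 (R : realType) (eA eB : R) (p : behaviour R) : Prop :=
  exists (d : measure_display) (T : measurableType d) (q : probability T R)
         (pA pB : bool -> bool -> T -> bool -> R),
    (forall x y a, measurable_fun setT (fun l => pA x y l a)) /\
    (forall x y b, measurable_fun setT (fun l => pB x y l b)) /\
    (forall x y l, is_distr (pA x y l)) /\
    (forall x y l, is_distr (pB x y l)) /\
    (forall a b x y,
        (\int[q]_l (pA x y l a * pB x y l b)%:E)%E = (p a b x y)%:E) /\
    (forall x y y' l, tvd (pA x y l) (pA x y' l) <= eA) /\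
    (forall y x x' l, tvd (pB x y l) (pB x' y l) <= eB).

Definition correlator (R : realType) (p : behaviour R) (x y : bool) : R :=
  \sum_(a : bool) \sum_(b : bool) bsign R a * bsign R b * p a b x y.

Definition chsh (R : realType) (p : behaviour R) : R :=
  correlator p false false + correlator p false true
  + correlator p true false - correlator p true true.

From HB Require Import structures.
From mathcomp Require Import all_boot all_order all_algebra.
From mathcomp Require Import all_classical all_reals all_analysis.
From mathcomp Require Import measurable_realfun ring lra.

(* A behaviour in P_2 is a mixture of product boxes and the CHSH value is
   affine in the box, so it suffices to bound it on a product box.  There the
   correlator <A_x B_y> factors as the product of the biases a_x and b_xy of
   the two local answers; Alice's bias a_x cannot depend on y, and Bob's
   bias b_xy moves by at most 2 kappa when x changes.  Then
   a_0 (b_00 + b_01) + a_1 (b_10 - b_11) <= |b_00 + b_01| + |b_10 - b_11|,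
   and for either choice of signs one bracket is bounded by 2 and the other by
   2 kappa.  The bound is attained by a deterministic Alice together with a
   Bob who flips his answer with probability kappa on input (1, 1) only. *)

Set Implicit Arguments.
Unset Strict Implicit.
Unset Printing Implicit Defensive.
Import Order.TTheory GRing.Theory Num.Theory.
Local Open Scope ring_scope.

Definition bias (R : zmodType) (f : bool -> R) : R := f false - f true.

Section distributions_on_bool.
Variable R : realType.
Implicit Types f g : bool -> R.

Lemma distr_bounds f a : is_distr f -> 0 <= f a <= 1.
Proof.
by move=> [f_ge0 f1]; have := f_ge0 false; have := f_ge0 true; case: a; lra.
Qed.

Lemma bias_bounds f : is_distr f -> -1 <= bias f <= 1.
Proof.
by move=> [f_ge0 f1]; have := f_ge0 false; have := f_ge0 true; rewrite /bias; lra.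
Qed.

Lemma tvd_distr f g : is_distr f -> is_distr g ->
  tvd f g = `|bias f - bias g| / 2.
Proof.
move=> [_ f1] [_ g1]; rewrite /tvd /bias.
have -> : f true - g true = - (f false - g false) by lra.
have -> : f false - f true - (g false - g true) = 2 * (f false - g false) by lra.
by rewrite normrN normrM ger0_norm //; field.
Qed.

End distributions_on_bool.

Section local_chsh_bound.
Variable R : realType.

Lemma mulr_le_norm (a z : R) : -1 <= a <= 1 -> a * z <= `|z|.
Proof.
move=> a_bnd; apply: le_trans (ler_norm _) _; rewrite normrM.
by apply: ler_piMl => //; rewrite ler_norml.
Qed.

Lemma norm_addr_subr_le (k u v u' v' : R) :
  -1 <= u <= 1 -> -1 <= v <= 1 -> -1 <= u' <= 1 -> -1 <= v' <= 1 ->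
  `|u - u'| <= 2 * k -> `|v - v'| <= 2 * k ->
  `|u + v| + `|u' - v'| <= 2 + 2 * k.
Proof.
rewrite !ler_norml => *.
have [uv|uv] := lerP 0 (u + v);
  [rewrite (ger0_norm uv) | rewrite (ltr0_norm uv)];
have [uv'|uv'] := lerP 0 (u' - v');
  rewrite ?(ger0_norm uv') ?(ltr0_norm uv'); lra.
Qed.

Lemma chsh_local_bound (k a0 a1 u v u' v' : R) :
  -1 <= a0 <= 1 -> -1 <= a1 <= 1 ->
  -1 <= u <= 1 -> -1 <= v <= 1 -> -1 <= u' <= 1 -> -1 <= v' <= 1 ->
  `|u - u'| <= 2 * k -> `|v - v'| <= 2 * k ->
  a0 * u + a0 * v + a1 * u' - a1 * v' <= 2 + 2 * k.
Proof.
move=> a0_bnd a1_bnd u_bnd v_bnd u'_bnd v'_bnd du dv.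
have := mulr_le_norm (u + v) a0_bnd; have := mulr_le_norm (u' - v') a1_bnd.
have := norm_addr_subr_le u_bnd v_bnd u'_bnd v'_bnd du dv; lra.
Qed.

End local_chsh_bound.

Definition product_behaviour (R : realType) (f g : bool -> bool -> bool -> R) :
  behaviour R := fun a b x y => f x y a * g x y b.

Lemma correlator_product (R : realType) (f g : bool -> bool -> bool -> R) x y :
  correlator (product_behaviour f g) x y = bias (f x y) * bias (g x y).
Proof. by rewrite /correlator !big_bool /bsign /bias /product_behaviour /=; ring. Qed.

Lemma chsh_product_le (R : realType) (k : R) (f g : bool -> bool -> bool -> R) :
  (forall x y, is_distr (f x y)) -> (forall x y, is_distr (g x y)) ->
  (forall x, bias (f x false) = bias (f x true)) ->
  (forall y, tvd (g false y) (g true y) <= k) ->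
  chsh (product_behaviour f g) <= 2 + 2 * k.
Proof.
move=> f_distr g_distr f_nosig g_tvd.
have dg y : `|bias (g false y) - bias (g true y)| <= 2 * k.
  by have := g_tvd y; rewrite tvd_distr //; lra.
rewrite /chsh !correlator_product !f_nosig.
by apply: chsh_local_bound; rewrite ?bias_bounds ?dg.
Qed.

Lemma sum_pairE (R : nmodType) (I J : finType) (F : I * J -> R) :
  \sum_(p : I * J) F p = \sum_i \sum_j F (i, j).
Proof. by rewrite pair_bigA; apply: eq_bigr => -[]. Qed.

Definition chsh_coef (R : nzRingType) (i : bool * bool * bool * bool) : R :=
  let: (a, b, x, y) := i in bsign R (x && y) * bsign R a * bsign R b.

Lemma chsh_sumE (R : realType) (p : behaviour R) :
  chsh p = \sum_(i : bool * bool * bool * bool)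
             chsh_coef R i * p i.1.1.1 i.1.1.2 i.1.2 i.2.
Proof.
by rewrite !sum_pairE !big_bool /chsh /correlator !big_bool /chsh_coef /bsign /=; ring.
Qed.

Section mixtures.
Context d (T : measurableType d) (R : realType) (q : probability T R).
Local Open Scope ereal_scope.

Lemma integrable_bounded (f : T -> R) (M : R) : measurable_fun setT f ->
  (forall l, (`|f l| <= M)%R) -> q.-integrable setT (EFin \o f).
Proof.
move=> mf f_le; apply: (@le_integrable _ _ _ q _ measurableT _ (EFin \o cst M)).
- exact/measurable_EFinP.
- by move=> l _ /=; rewrite lee_fin (le_trans (f_le l)) ?ler_norm.
- exact: finite_measure_integrable_cst.
Qed.

Lemma integrable_lincomb (I : finType) (c : I -> R) (f : I -> T -> R) :
  (forall i, q.-integrable setT (EFin \o f i)) ->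
  q.-integrable setT (fun l => (\sum_i c i * f i l)%:E).
Proof.
move=> f_int; under eq_fun do rewrite -sumEFin.
apply: integrable_sum => // i _; under eq_fun do rewrite EFinM.
by apply: integrableZl => //; exact: f_int.
Qed.

Lemma integral_lincomb (I : finType) (c : I -> R) (f : I -> T -> R) :
  (forall i, q.-integrable setT (EFin \o f i)) ->
  \int[q]_l (\sum_i c i * f i l)%:E = \sum_i (c i)%:E * \int[q]_l (f i l)%:E.
Proof.
move=> f_int; under eq_integral do rewrite -sumEFin.
under eq_integral do under eq_bigr do rewrite EFinM.
rewrite integral_sum //; last by move=> i; apply: integrableZl => //; exact: f_int.
by apply: eq_bigr => i _; rewrite integralZl //; exact: f_int.
Qed.

Lemma chsh_mixture (P : T -> behaviour R) (p : behaviour R) :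
  (forall a b x y, q.-integrable setT (EFin \o fun l => P l a b x y)) ->
  (forall a b x y, \int[q]_l (P l a b x y)%:E = (p a b x y)%:E) ->
  (chsh p)%:E = \int[q]_l (chsh (P l))%:E.
Proof.
move=> P_int P_mix; under eq_integral do rewrite chsh_sumE.
rewrite integral_lincomb; last by move=> [[[a b] x] y]; exact: P_int.
by rewrite chsh_sumE -sumEFin; apply: eq_bigr => i _; rewrite P_mix EFinM.
Qed.

Lemma integrable_chsh_mixture (P : T -> behaviour R) :
  (forall a b x y, q.-integrable setT (EFin \o fun l => P l a b x y)) ->
  q.-integrable setT (fun l => (chsh (P l))%:E).
Proof.
move=> P_int; under eq_fun do rewrite chsh_sumE.
by apply: integrable_lincomb => -[[[a b] x] y]; exact: P_int.
Qed.

End mixtures.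

Lemma chsh_le_of_in_P2 (R : realType) (k : R) (p : behaviour R) :
  in_P2 0 k p -> chsh p <= 2 + 2 * k.
Proof.
move=> [d [T [q [pA [pB [pA_meas [pB_meas [pA_distr [pB_distr
  [p_mix [pA_tvd pB_tvd]]]]]]]]]]].
pose P l := product_behaviour (fun x y => pA x y l) (fun x y => pB x y l).
have P_int a b x y : q.-integrable setT (EFin \o fun l => P l a b x y).
  apply: (@integrable_bounded _ _ _ _ _ 1); first exact: measurable_funM.
  move=> l; have /andP[? ?] := distr_bounds a (pA_distr x y l).
  have /andP[? ?] := distr_bounds b (pB_distr x y l).
  by rewrite ger0_norm ?mulr_ge0 ?mulr_ile1.
have P_le l : chsh (P l) <= 2 + 2 * k.
  apply: chsh_product_le => // x; apply/eqP; rewrite -subr_eq0 -normr_le0.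
  by have := pA_tvd x false true l; rewrite tvd_distr //; lra.
rewrite -lee_fin (chsh_mixture P_int p_mix).
apply: (@le_trans _ _ (\int[q]_l (cst (2 + 2 * k)%:E) l))%E.
  apply: le_integral => //; first exact: integrable_chsh_mixture.
    exact: finite_measure_integrable_cst.
  by move=> l _; rewrite lee_fin.
by rewrite integral_cst //= probability_setT mule1.
Qed.

Lemma in_P2_product (R : realType) (eA eB : R) (f g : bool -> bool -> bool -> R) :
  (forall x y, is_distr (f x y)) -> (forall x y, is_distr (g x y)) ->
  (forall x y y', tvd (f x y) (f x y') <= eA) ->
  (forall y x x', tvd (g x y) (g x' y) <= eB) ->
  in_P2 eA eB (product_behaviour f g).
Proof.
move=> f_distr g_distr f_tvd g_tvd.
exists _, R, (dirac (0 : R) : probability R R),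
  (fun x y _ => f x y), (fun x y _ => g x y).
do 2 (split; first by move=> *; exact: measurable_cst).
split=> //; split=> //; split=> // a b x y.
by rewrite integral_cst //= diracT mule1.
Qed.

Definition bernoulli_bool (R : realType) (t : R) : bool -> R :=
  fun a => if a then t else 1 - t.

Lemma bernoulli_bool_distr (R : realType) (t : R) :
  0 <= t <= 1 -> is_distr (bernoulli_bool t).
Proof. by move=> /andP[t_ge0 t_le1]; split=> [[]|] /=; lra. Qed.

Lemma bias_bernoulli_bool (R : realType) (t : R) :
  bias (bernoulli_bool t) = 1 - 2 * t.
Proof. by rewrite /bias /=; ring. Qed.

Lemma tvd_bernoulli_bool (R : realType) (s t : R) :
  tvd (bernoulli_bool s) (bernoulli_bool t) = `|s - t|.
Proof.
rewrite /tvd /= (_ : 1 - s - (1 - t) = - (s - t)) ?normrN; last by ring.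
by field.
Qed.

Definition leaky_box (R : realType) (kappa : R) : behaviour R :=
  product_behaviour (fun _ _ => bernoulli_bool 0)
    (fun x y => bernoulli_bool (if x && y then kappa else 0)).

Lemma leaky_box_in_P2 (R : realType) (kappa : R) :
  0 <= kappa <= 1 -> in_P2 0 kappa (leaky_box kappa).
Proof.
move=> k_bnd; apply: in_P2_product => [x y|x y|x y y'|y x x'].
- by apply: bernoulli_bool_distr; rewrite lexx ler01.
- by apply: bernoulli_bool_distr; case: (x && y); rewrite ?lexx ?ler01.
- by rewrite tvd_bernoulli_bool subrr normr0.
- rewrite tvd_bernoulli_bool.
  by case: x x' y => [] [] [] /=;
    rewrite ?subrr ?subr0 ?sub0r ?normrN ?normr0 ?ger0_norm //; case/andP: k_bnd.
Qed.

Lemma chsh_leaky_box (R : realType) (kappa : R) :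
  chsh (leaky_box kappa) = 2 + 2 * kappa.
Proof. by rewrite /chsh !correlator_product !bias_bernoulli_bool /=; ring. Qed.

Theorem mainTheorem9 (R : realType) (kappa : R) (hk0 : 0 <= kappa) (hk1 : kappa < 1) :
  (forall p : behaviour R, in_P2 0 kappa p -> chsh p <= 2 + 2 * kappa) /\
  (exists p : behaviour R, in_P2 0 kappa p /\ chsh p = 2 + 2 * kappa).
Proof.
split=> [p|]; first exact: chsh_le_of_in_P2.
exists (leaky_box kappa); split; last exact: chsh_leaky_box.
by apply: leaky_box_in_P2; rewrite hk0 ltW.
Qed.
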